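(* Let $R$ be a conformal superalgebra and let $0\to M\xrightarrow{d_1}N\xrightarrow{d_2}P\to0$ be an exact sequence of $R$-modules such that for every morphism $T:X\to Y$ in this sequence (including $0\to M$ and $P\to 0$), $Y/T(X)$ is a finitely generated torsion-free $\mathbb C[\partial]$-module. Then the dual sequence $0\to P^*\xrightarrow{d_2^*}N^*\xrightarrow{d_1^*}M^*\to0$ is exact.
   Context: A conformal superalgebra $R$ is a $\mathbb Z_2$-graded $\mathbb C[\partial]$-module with a $\mathbb C$-linear $\lambda$-bracket $R\otimes R\to\mathbb C[\lambda]\otimes R$ satisfying $[\partial a_\lambda b]=-\lambda[a_\lambda b]$, $[a_\lambda\partial b]=(\lambda+\partial)[a_\lambda b]$, $[a_\lambda b]=-(-1)^{p(a)p(b)}[b_{-\lambda-\partial}a]$ and $[a_\lambda[b_\mu c]]=[[a_\lambda b]_{\lambda+\mu}c]+(-1)^{p(a)p(b)}[b_\mu[a_\lambda c]]$. An $R$-module $M$ is a $\mathbb Z_2$-graded $\mathbb C[\partial]$-module with a $\lambda$-action $a_\lambda v=\sum_{n\ge0}\frac{\lambda^n}{n!}a_{(n)}v$ satisfying the usual axioms; a morphism $T:M\to N$ of $R$-modules is a linear map with $T(\partial m)=\partial T(m)$ and $T(a_\lambda m)=a_\lambda T(m)$. The conformal dual is $M^*=\{f_\lambda:M\to\mathbb C[\lambda]\mid f_\lambda(\partial m)=\lambda f_\lambda(m)\}$ with $(\partial f)_\lambda(m)=-\lambda f_\lambda(m)$ and $(a_\lambda f)_\mu(m)=-(-1)^{p(a)p(f)}f_{\mu-\lambda}(a_\lambda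 m)$. The dual morphism $T^*:N^*\to M^*$ is $[T^*(f)]_\lambda(m)=-f_\lambda(T(m))$. *)

From HB Require Import structures.
From mathcomp Require Import all_boot all_order all_algebra.
From mathcomp Require Import complex.
From mathcomp Require Import reals Rstruct.

Set Implicit Arguments.
Unset Strict Implicit.
Unset Printing Implicit Defensive.

Import Order.TTheory GRing.Theory Num.Theory.
Local Open Scope ring_scope.

Notation CC := (Rdefinitions.R[i]).

Definition clinear (U V : lmodType CC) (f : U -> V) : Prop :=
  GRing.linear_for *:%R f.

(* ---------- Z_2-graded C[∂]-modules ----------
   A Z_2-grading V = V_0 (+) V_1 is encoded by the parity involution
   par (par = id on V_0, par = -id on V_1); v is homogeneous of parity
   p : bool iff par v = (-1)^p v.  The action of ∂ is a C-linear
   endomorphism dd preserving the grading. *)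
Record gdmod (V : lmodType CC) := GDmod {
  dd : V -> V;
  par : V -> V;
  dd_lin : clinear dd;
  par_lin : clinear par;
  par_invol : forall v, par (par v) = v;
  par_dd : forall v, par (dd v) = dd (par v)
}.

Definition is_hom (V : lmodType CC) (G : gdmod V) (p : bool) (v : V) : Prop :=
  par G v = (-1) ^+ p *: v.

Definition psign (p q : bool) : CC := (-1) ^+ (p && q).

Definition pact (V : lmodType CC) (G : gdmod V) (q : {poly CC}) (v : V) : V :=
  \sum_(i < size q) q`_i *: iter i (dd G) v.

(* ---------- conformal superalgebras ----------
   The lambda-bracket [a_λ b] = \sum_{n>=0} λ^n/n! a_(n) b (an element of
   C[λ] ⊗ R) is encoded by its coefficients, the n-th products a_(n) b
   = br n a b, which vanish for n large.  The four axioms of the paper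
   are written coefficientwise (for homogeneous a, b, c where a sign
   occurs). *)
Record confsuperalg (R : lmodType CC) := ConfSuperalg {
  rgr : gdmod R;
  br : nat -> R -> R -> R;
  br_linr : forall n a, clinear (br n a);
  br_linl : forall n b, clinear (fun a => br n a b);
  br_fin : forall a b, exists N, forall n, (N <= n)%N -> br n a b = 0;
  br_par : forall p q a b n, is_hom rgr p a -> is_hom rgr q b ->
             is_hom rgr (p (+) q) (br n a b);
  (* [∂a_λ b] = -λ [a_λ b] *)
  br_ddl0 : forall a b, br 0 (dd rgr a) b = 0;
  br_ddl : forall n a b, br n.+1 (dd rgr a) b = - (n.+1)%:R *: br n a b;
  (* [a_λ ∂b] = (λ+∂) [a_λ b] *)
  br_ddr0 : forall a b, br 0 a (dd rgr b) = dd rgr (br 0 a b);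
  br_ddr : forall n a b,
      br n.+1 a (dd rgr b) = dd rgr (br n.+1 a b) + (n.+1)%:R *: br n a b;
  (* [a_λ b] = -(-1)^{p(a)p(b)} [b_{-λ-∂} a] *)
  br_skew : forall p q a b n N, is_hom rgr p a -> is_hom rgr q b ->
      (forall k, (N <= k)%N -> br k b a = 0) ->
      br n a b = - psign p q *:
        \sum_(i < N) (((-1) ^+ (n + i) / (i`!)%:R) *: iter i (dd rgr) (br (n + i) b a));
  (* [a_λ [b_μ c]] = [[a_λ b]_{λ+μ} c] + (-1)^{p(a)p(b)} [b_μ [a_λ c]] *)
  br_jacobi : forall p q a b c m n, is_hom rgr p a -> is_hom rgr q b ->
      br m a (br n b c) =
        \sum_(j < m.+1) ('C(m, j))%:R *: br (m + n - j) (br j a b) c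
        + psign p q *: br n b (br m a c)
}.

(* ---------- modules over a conformal superalgebra ----------
   a_λ v = \sum_{n>=0} λ^n/n! a_(n) v, encoded by the n-th actions
   act n a v = a_(n) v. *)
Record cmodule (R : lmodType CC) (A : confsuperalg R) (M : lmodType CC) :=
  CModule {
  mgr : gdmod M;
  act : nat -> R -> M -> M;
  act_linr : forall n a, clinear (act n a);
  act_linl : forall n v, clinear (fun a => act n a v);
  act_fin : forall a v, exists N, forall n, (N <= n)%N -> act n a v = 0;
  act_par : forall p q a v n, is_hom (rgr A) p a -> is_hom mgr q v ->
             is_hom mgr (p (+) q) (act n a v);
  (* (∂a)_λ v = -λ a_λ v *)
  act_ddl0 : forall a v, act 0 (dd (rgr A) a) v = 0;
  act_ddl : forall n a v,
      act n.+1 (dd (rgr A) a) v = - (n.+1)%:R *: act n a v;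
  (* a_λ (∂v) = (λ+∂) a_λ v *)
  act_ddr0 : forall a v, act 0 a (dd mgr v) = dd mgr (act 0 a v);
  act_ddr : forall n a v,
      act n.+1 a (dd mgr v) = dd mgr (act n.+1 a v) + (n.+1)%:R *: act n a v;
  (* a_λ (b_μ v) - (-1)^{p(a)p(b)} b_μ (a_λ v) = [a_λ b]_{λ+μ} v *)
  act_jacobi : forall p q a b v m n, is_hom (rgr A) p a -> is_hom (rgr A) q b ->
      act m a (act n b v) - psign p q *: act n b (act m a v) =
        \sum_(j < m.+1) ('C(m, j))%:R *: act (m + n - j) (br A j a b) v
}.

Definition cmorphism (R : lmodType CC) (A : confsuperalg R)
    (M N : lmodType CC) (SM : cmodule A M) (SN : cmodule A N) (T : M -> N)
    : Prop :=
  [/\ clinear T,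
      forall m, T (dd (mgr SM) m) = dd (mgr SN) (T m) &
      forall n a m, T (act SM n a m) = act SN n a (T m)].

Definition short_exact (M N P : lmodType CC) (d1 : M -> N) (d2 : N -> P)
    : Prop :=
  [/\ injective d1,
      forall n, d2 n = 0 <-> (exists m, n = d1 m) &
      forall p, exists n, p = d2 n].

(* "Y / T(X) is a finitely generated torsion-free C[∂]-module", where
   S is the underlying set of the submodule T(X) of Y. *)
Definition fg_quot (Y : lmodType CC) (G : gdmod Y) (S : Y -> Prop) : Prop :=
  exists gens : seq Y, forall y, exists (cs : seq {poly CC}) (s : Y),
    S s /\ y = \sum_(i < size gens) pact G cs`_i gens`_i + s.
Definition tf_quot (Y : lmodType CC) (G : gdmod Y) (S : Y -> Prop) : Prop :=
  forall (q : {poly CC}) (y : Y), q != 0 -> S (pact G q y) -> S y.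
Definition fg_tf_quot (Y : lmodType CC) (G : gdmod Y) (S : Y -> Prop) : Prop :=
  fg_quot G S /\ tf_quot G S.

Definition img (X Y : Type) (T : X -> Y) : Y -> Prop :=
  fun y => exists x, y = T x.

Definition cdual (M : lmodType CC) (G : gdmod M) (f : M -> {poly CC}) : Prop :=
  clinear f /\ forall m, f (dd G m) = 'X * f m.

Definition dualmap (M N : Type) (T : M -> N) (f : N -> {poly CC})
    : M -> {poly CC} := fun m => - f (T m).

Definition dual_short_exact (M N P : lmodType CC)
    (GM : gdmod M) (GN : gdmod N) (GP : gdmod P)
    (d1 : M -> N) (d2 : N -> P) : Prop :=
  [/\
      forall f, cdual GP f ->
        (forall n, dualmap d2 f n = 0) -> forall p, f p = 0,
      forall g, cdual GN g ->
        ((forall m, dualmap d1 g m = 0) <->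
         exists2 f, cdual GP f & forall n, g n = dualmap d2 f n) &
      forall h, cdual GM h ->
        exists2 g, cdual GN g & forall m, h m = dualmap d1 g m].

From HB Require Import structures.
From mathcomp Require Import all_boot all_order all_algebra.
From mathcomp Require Import complex.
From mathcomp Require Import reals Rstruct.
From Stdlib Require Import ClassicalEpsilon.
Set Implicit Arguments.
Unset Strict Implicit.
Unset Printing Implicit Defensive.
Import GRing.Theory.
Local Open Scope ring_scope.

(* Exactness of the dual sequence at P^* and at N^* is formal: d2 is onto, and
   a functional vanishing on d1(M) = ker d2 factors through d2.  Surjectivity
   of d1^* rests on d1(M) being a C[∂]-direct summand of N, which holds because
   N/d1(M) is finitely generated and torsion-free over the PID C[∂].  A
   complement of a saturated submodule S is built generator by generator: if
   S1 is the saturation of S + C[∂]g, then the finitely many components in S1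
   of the generators lie in S + C[∂]e for a single e (Bézout), whence
   S1 = S ⊕ C[∂]e.  The resulting C[∂]-linear retraction r : N -> M gives
   d1^*(r^* h) = h for h ∈ M^* (the signs of the two dual maps cancel). *)

Section ClinearTheory.
Variables (U W : lmodType CC) (f : U -> W).
Hypothesis f_lin : clinear f.

Lemma clinear0 : f 0 = 0.
Proof.
have := f_lin 1 0 0; rewrite !scale1r addr0 => f0.
by apply: (addrI (f 0)); rewrite addr0 -f0.
Qed.

Lemma clinearD x y : f (x + y) = f x + f y.
Proof. by have := f_lin 1 x y; rewrite !scale1r. Qed.

Lemma clinearZ a x : f (a *: x) = a *: f x.
Proof. by have := f_lin a x 0; rewrite !addr0 clinear0 addr0. Qed.

Lemma clinearB x y : f (x - y) = f x - f y.
Proof. by rewrite clinearD -scaleN1r clinearZ scaleN1r. Qed.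

Lemma clinear_sum I (r : seq I) (P : pred I) (F : I -> U) :
  f (\sum_(i <- r | P i) F i) = \sum_(i <- r | P i) f (F i).
Proof. exact: (big_morph f clinearD clinear0). Qed.

End ClinearTheory.

Definition dmorphism (M N : lmodType CC) (GM : gdmod M) (GN : gdmod N)
    (T : M -> N) : Prop :=
  clinear T /\ forall m, T (dd GM m) = dd GN (T m).

Section PolynomialAction.
Variables (V : lmodType CC) (G : gdmod V).
Local Notation D := (dd G).
Local Notation pa := (pact G).
Implicit Types (p q : {poly CC}) (v : V).

Lemma iter_dd_lin i : clinear (iter i D).
Proof. by elim: i => [|i IH] a u v //=; rewrite IH (dd_lin G). Qed.

Lemma pact_bound p v n : (size p <= n)%N ->
  pa p v = \sum_(i < n) p`_i *: iter i D v.
Proof.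
move=> le_pn; rewrite /pact (big_ord_widen n (fun i => p`_i *: iter i D v)) //.
rewrite [RHS](bigID (fun i : 'I_n => (i < size p)%N)) /=.
rewrite [X in _ + X]big1 ?addr0 //.
by move=> i; rewrite -leqNgt => /(nth_default 0) ->; rewrite scale0r.
Qed.

Lemma pact0l v : pa 0 v = 0.
Proof. by rewrite /pact size_poly0 big_ord0. Qed.

Lemma pactDl p q v : pa (p + q) v = pa p v + pa q v.
Proof.
set n := maxn (size p) (size q).
rewrite (pact_bound v (size_polyD p q)) (@pact_bound p v n) ?leq_maxl //.
rewrite (@pact_bound q v n) ?leq_maxr // -big_split /=.
by apply: eq_bigr => i _; rewrite coefD scalerDl.
Qed.

Lemma pactZl c p v : pa (c *: p) v = c *: pa p v.
Proof.
rewrite (pact_bound v (size_scale_leq c p)) /pact scaler_sumr.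
by apply: eq_bigr => i _; rewrite coefZ scalerA.
Qed.

Lemma pact_lin p : clinear (pa p).
Proof.
move=> a u w; rewrite /pact scaler_sumr -big_split /=.
by apply: eq_bigr => i _; rewrite iter_dd_lin scalerDr !scalerA mulrC.
Qed.

Lemma pactC c v : pa c%:P v = c *: v.
Proof.
by rewrite (@pact_bound _ _ 1) ?size_polyC ?leq_b1 // big_ord1 coefC.
Qed.

Lemma pact1 v : pa 1 v = v.
Proof. by rewrite pactC scale1r. Qed.

Lemma pact_mulX p v : pa (p * 'X) v = pa p (D v).
Proof.
rewrite (@pact_bound _ _ (size p).+1); last first.
  by apply: leq_trans (size_polyMleq _ _) _; rewrite size_polyX addn2.
rewrite big_ord_recl coefMX /= scale0r add0r /pact.
by apply: eq_bigr => i _; rewrite coefMX /= -iterS iterSr.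
Qed.

Lemma dd_pact p v : D (pa p v) = pa p (D v).
Proof.
rewrite /pact (clinear_sum (dd_lin G)); apply: eq_bigr => i _.
by rewrite (clinearZ (dd_lin G)) -iterS iterSr.
Qed.

Lemma pactM p q v : pa (p * q) v = pa p (pa q v).
Proof.
elim/poly_ind: p q v => [|p c IH] q v; first by rewrite mul0r !pact0l.
rewrite mulrDl pactDl mulrAC pact_mulX IH pactDl pact_mulX dd_pact.
by rewrite mul_polyC pactZl !pactC.
Qed.

Lemma pactC_comm p q v : pa p (pa q v) = pa q (pa p v).
Proof. by rewrite -!pactM mulrC. Qed.

Lemma pact0r p : pa p 0 = 0.
Proof. exact: (clinear0 (pact_lin p)). Qed.

Lemma pactDr p x y : pa p (x + y) = pa p x + pa p y.
Proof. exact: (clinearD (pact_lin p)). Qed.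

Lemma pactBr p x y : pa p (x - y) = pa p x - pa p y.
Proof. exact: (clinearB (pact_lin p)). Qed.

Lemma pactZr p a x : pa p (a *: x) = a *: pa p x.
Proof. exact: (clinearZ (pact_lin p)). Qed.

End PolynomialAction.

Lemma dmorphism_pact (V W : lmodType CC) (GV : gdmod V) (GW : gdmod W)
    (f : V -> W) p v :
  dmorphism GV GW f -> f (pact GV p v) = pact GW p (f v).
Proof.
move=> [f_lin f_dd]; rewrite /pact (clinear_sum f_lin); apply: eq_bigr => i _.
rewrite (clinearZ f_lin); congr (_ *: _).
by elim: (nat_of_ord i) => [|k IH] //=; rewrite f_dd IH.
Qed.

Section Submodules.
Variables (V : lmodType CC) (G : gdmod V).
Local Notation D := (dd G).
Local Notation pa := (pact G).
Implicit Types (p q P a b d : {poly CC}) (e g x y : V) (S T W : V -> Prop).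

Definition submod S := [/\ S 0, (forall x y, S x -> S y -> S (x + y)),
  (forall (c : CC) x, S x -> S (c *: x)) & (forall x, S x -> S (D x))].

Section SubmodTheory.
Variable S : V -> Prop.
Hypothesis S_sub : submod S.

Lemma submod0 : S 0. Proof. by case: S_sub. Qed.

Lemma submodD x y : S x -> S y -> S (x + y).
Proof. by case: S_sub => _ + _ _; apply. Qed.

Lemma submodZ c x : S x -> S (c *: x).
Proof. by case: S_sub => _ _ + _; apply. Qed.

Lemma submod_dd x : S x -> S (D x).
Proof. by case: S_sub => _ _ _; apply. Qed.

Lemma submodB x y : S x -> S y -> S (x - y).
Proof. by move=> Sx Sy; rewrite -scaleN1r; apply/submodD/submodZ. Qed.

Lemma submod_sum I (r : seq I) (P : pred I) (F : I -> V) :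
  (forall i, P i -> S (F i)) -> S (\sum_(i <- r | P i) F i).
Proof. by move=> SF; apply: big_ind => //; [exact: submod0 | exact: submodD]. Qed.

Lemma submod_pact p x : S x -> S (pa p x).
Proof.
move=> Sx; apply: submod_sum => i _; apply: submodZ.
by elim: (nat_of_ord i) => [|k IH] //=; apply: submod_dd.
Qed.

Lemma tf_quot_cancel P x y w : tf_quot G S -> P != 0 ->
  S (pa P x - w) -> S (pa P y - w) -> S (x - y).
Proof.
move=> S_tf P0 Sx Sy; apply: (S_tf P) => //.
have -> : pa P (x - y) = (pa P x - w) - (pa P y - w).
  by rewrite pactBr opprB addrA subrK.
exact: submodB.
Qed.

End SubmodTheory.

(* [add_span S e] is S + C[∂]e, [sat_span S g] the saturation of S + C[∂]g. *)
Definition add_span S e x := exists p, S (x - pa p e).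
Definition sat_span S g x := exists q r, q != 0 /\ S (pa q x - pa r g).

Lemma add_span_submod S e : submod S -> submod (add_span S e).
Proof.
move=> S_sub; split.
- by exists 0; rewrite pact0l subr0; apply: (submod0 S_sub).
- move=> x y [p Sx] [q Sy]; exists (p + q).
  by rewrite pactDl opprD addrACA; apply: (submodD S_sub).
- move=> c x [p Sx]; exists (c *: p).
  by rewrite pactZl -scalerBr; apply: (submodZ S_sub).
- move=> x [p Sx]; exists (p * 'X).
  by rewrite pact_mulX -dd_pact -(clinearB (dd_lin G)); apply: (submod_dd S_sub).
Qed.

Lemma add_span_sub S e x : S x -> add_span S e x.
Proof. by move=> Sx; exists 0; rewrite pact0l subr0. Qed.

Lemma add_span_trans S e e' x : submod S ->
  add_span S e' e -> add_span S e x -> add_span S e' x.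
Proof.
move=> S_sub [p' Se] [p Sx]; exists (p * p').
have -> : x - pa (p * p') e' = (x - pa p e) + pa p (e - pa p' e').
  by rewrite pactBr pactM addrA subrK.
by apply: (submodD S_sub) => //; apply: (submod_pact S_sub).
Qed.

Lemma sat_span_submod S g : submod S -> submod (sat_span S g).
Proof.
move=> S_sub; split.
- exists 1, 0; split; first exact: oner_neq0.
  by rewrite pact0r pact0l subr0; apply: (submod0 S_sub).
- move=> x y [q1 [r1 [q1_0 Sx]]] [q2 [r2 [q2_0 Sy]]].
  exists (q1 * q2), (q2 * r1 + q1 * r2); split; first by rewrite mulf_neq0.
  have -> : pa (q1 * q2) (x + y) - pa (q2 * r1 + q1 * r2) g =
      pa q2 (pa q1 x - pa r1 g) + pa q1 (pa q2 y - pa r2 g).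
    by rewrite !pactBr pactDr pactDl -!pactM [q1 * q2]mulrC opprD addrACA.
  by apply: (submodD S_sub); apply: (submod_pact S_sub).
- move=> c x [q [r [q0 Sx]]]; exists q, (c *: r); split => //.
  by rewrite pactZr pactZl -scalerBr; apply: (submodZ S_sub).
- move=> x [q [r [q0 Sx]]]; exists q, (r * 'X); split => //.
  by rewrite pact_mulX -!dd_pact -(clinearB (dd_lin G)); apply: (submod_dd S_sub).
Qed.

Lemma sat_span_pact_gen S g p : submod S -> sat_span S g (pa p g).
Proof.
move=> S_sub; exists 1, p; rewrite pact1 subrr oner_neq0.
by split => //; apply: (submod0 S_sub).
Qed.

Lemma sat_span_tf S g : tf_quot G (sat_span S g).
Proof.
move=> p y p0 [q [r [q0 Sy]]]; exists (q * p), r.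
by rewrite pactM mulf_neq0.
Qed.

Lemma sat_span_sub S g x : S x -> sat_span S g x.
Proof.
by move=> Sx; exists 1, 0; rewrite pact1 pact0l subr0 oner_neq0.
Qed.

Section CyclicSaturation.
Variables (S : V -> Prop) (g : V).
Hypotheses (S_sub : submod S) (S_tf : tf_quot G S).

Lemma add_span_divp P a d e x : P != 0 -> d %| a ->
  S (pa P e - pa d g) -> S (pa P x - pa a g) -> add_span S e x.
Proof.
move=> P0 da Se Sx; exists (a %/ d).
apply: (tf_quot_cancel S_sub S_tf P0 Sx).
have -> : pa a g = pa (a %/ d) (pa d g) by rewrite -pactM divpK.
rewrite pactC_comm -pactBr.
exact: (submod_pact S_sub).
Qed.

(* The witness is e = u x + v y, where u a + v b = gcd(a, b) =: d (Bézout);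
   then P e = d g modulo S. *)
Lemma sat_span_bezout P a b x y : P != 0 ->
  S (pa P x - pa a g) -> S (pa P y - pa b g) ->
  exists e, [/\ sat_span S g e, add_span S e x & add_span S e y].
Proof.
move=> P0 Sx Sy.
set u := (egcdp a b).1; set v := (egcdp a b).2; set d := u * a + v * b.
have da : d %| a by rewrite -(eqp_dvdl _ (egcdpE a b)) dvdp_gcdl.
have db : d %| b by rewrite -(eqp_dvdl _ (egcdpE a b)) dvdp_gcdr.
have Se : S (pa P (pa u x + pa v y) - pa d g).
  have -> : pa P (pa u x + pa v y) - pa d g =
      pa u (pa P x - pa a g) + pa v (pa P y - pa b g).
    by rewrite pactDr !pactBr pactDl !pactM !(pactC_comm G P) opprD addrACA.
  by apply: (submodD S_sub); apply: (submod_pact S_sub).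
exists (pa u x + pa v y); split.
- by exists P, d.
- exact: add_span_divp da Se Sx.
- exact: add_span_divp db Se Sy.
Qed.

Lemma sat_span_cyclic (zs : seq V) : {in zs, forall z, sat_span S g z} ->
  exists2 e, sat_span S g e & {in zs, forall z, add_span S e z}.
Proof.
elim: zs => [|z zs IH] zs_sat.
  by exists 0 => //; apply: sat_span_sub; apply: (submod0 S_sub).
have [e [Q [d [Q0 Se]]] zs_e] : exists2 e, sat_span S g e &
    {in zs, forall z, add_span S e z}.
  by apply: IH => z' z'_zs; apply: zs_sat; rewrite inE z'_zs orbT.
have [q [r [q0 Sz]]] := zs_sat z (mem_head z zs).
have [|||e' [e'_sat e_e' z_e']] := @sat_span_bezout (Q * q) (q * d) (Q * r) e z.
- by rewrite mulf_neq0.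
- by rewrite [Q * q]mulrC !pactM -pactBr; apply: (submod_pact S_sub).
- by rewrite !pactM -pactBr; apply: (submod_pact S_sub).
exists e' => // z'; rewrite inE => /predU1P [-> // | z'_zs].
exact: add_span_trans S_sub e_e' (zs_e z' z'_zs).
Qed.

Lemma sat_span_cyclic_free (zs : seq V) : {in zs, forall z, sat_span S g z} ->
  exists e, [/\ sat_span S g e, {in zs, forall z, add_span S e z} &
                forall p, S (pa p e) -> pa p e = 0].
Proof.
move=> zs_sat; have [e e_sat zs_e] := sat_span_cyclic zs_sat.
have [Se | nSe] := classic (S e).
  exists 0; split; first by apply: sat_span_sub; apply: (submod0 S_sub).
  - move=> z /zs_e [p Sz]; apply: add_span_sub.
    rewrite -(subrK (pa p e) z); apply: (submodD S_sub) => //.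
    exact: (submod_pact S_sub).
  - by move=> p _; rewrite pact0r.
exists e; split => // p Spe.
have [-> | p0] := eqVneq p 0; first by rewrite pact0l.
by case: nSe; apply: S_tf Spe.
Qed.

End CyclicSaturation.

Definition complement S T := [/\ submod T, (forall t, S t -> T t -> t = 0) &
  forall n, exists2 s, S s & T (n - s)].

Lemma complement_proj S T : complement S T ->
  exists pr : V -> V, forall n, S (pr n) /\ T (n - pr n).
Proof.
case=> _ _ dec; apply: (choice (fun n s => S s /\ T (n - s))) => n.
by have [s Ss Ts] := dec n; exists s.
Qed.

Section Projection.
Variables (S T : V -> Prop) (pr : V -> V).
Hypotheses (S_sub : submod S) (ST : complement S T).
Hypothesis pr_spec : forall n, S (pr n) /\ T (n - pr n).

Lemma proj_eq n s : S s -> T (n - s) -> pr n = s.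
Proof.
case: ST => T_sub ST0 _ Ss Ts; have [Spr Tpr] := pr_spec n.
apply/eqP; rewrite -subr_eq0; apply/eqP; apply: ST0; first exact: (submodB S_sub).
have -> : pr n - s = (n - s) - (n - pr n) by rewrite [RHS]addrC opprB addrA subrK.
exact: (submodB T_sub).
Qed.

Lemma proj_id s : S s -> pr s = s.
Proof.
by case: ST => T_sub _ _ Ss; apply: proj_eq; rewrite // subrr; apply: submod0.
Qed.

Lemma proj_dmorphism : dmorphism G G pr.
Proof.
case: ST => T_sub _ _; split => [a u w | n].
- have [Su Tu] := pr_spec u; have [Sw Tw] := pr_spec w.
  apply: proj_eq; first by apply: (submodD S_sub) => //; apply: (submodZ S_sub).
  rewrite opprD addrACA -scalerBr.
  by apply: (submodD T_sub) => //; apply: (submodZ T_sub).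
- have [Sn Tn] := pr_spec n.
  apply: proj_eq; first exact: (submod_dd S_sub).
  by rewrite -(clinearB (dd_lin G)); apply: (submod_dd T_sub).
Qed.

End Projection.

Definition spans S (gens : seq V) := forall y, exists (cs : seq {poly CC}) s,
  S s /\ y = \sum_(i < size gens) pa cs`_i gens`_i + s.

Lemma spans_sat_span S g gs : submod S -> spans S (g :: gs) ->
  spans (sat_span S g) gs.
Proof.
move=> S_sub span y; have [cs [s [Ss ->]]] := span y.
exists (behead cs), (pa cs`_0 g + s); split.
  apply: (submodD (sat_span_submod g S_sub)); first exact: sat_span_pact_gen.
  exact: sat_span_sub.
rewrite big_ord_recl -addrA addrCA; congr (_ + _).
by apply: eq_bigr => i _; rewrite nth_behead.
Qed.

Lemma spans_image S W (gens : seq V) (f : V -> V) :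
  spans S gens -> submod W -> dmorphism G G f ->
  (forall s, S s -> W (f s)) -> {in gens, forall z, W (f z)} ->
  forall y, W (f y).
Proof.
move=> span W_sub f_morph fS fgens y; have [cs [s [Ss ->]]] := span y.
have [f_lin _] := f_morph.
rewrite (clinearD f_lin) (clinear_sum f_lin).
apply: (submodD W_sub); last exact: fS.
apply: (submod_sum W_sub) => i _; rewrite (dmorphism_pact _ _ f_morph).
by apply: (submod_pact W_sub); apply: fgens; apply: mem_nth.
Qed.

(* The components in S1 = sat_span S g of the generators give S1 = S ⊕ C[∂]e,
   so C[∂]e + T1 complements S. *)
Lemma complement_sat_span S g gs T1 : submod S -> tf_quot G S ->
  spans S (g :: gs) -> complement (sat_span S g) T1 -> exists T, complement S T.
Proof.
move=> S_sub S_tf span cT1; have [T1_sub S1T1 _] := cT1.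
have S1_sub := sat_span_submod g S_sub.
have [pr pr_spec] := complement_proj cT1.
have pr_id := proj_id S1_sub cT1 pr_spec.
have [|e [e_S1 gens_e e_free]] :=
  @sat_span_cyclic_free S g S_sub S_tf (map pr (g :: gs)).
  by move=> _ /mapP [y _ ->]; exact: (pr_spec y).1.
have S1_e x : sat_span S g x -> add_span S e x.
  move=> S1x; rewrite -(pr_id _ S1x).
  apply: (spans_image span (add_span_submod e S_sub)).
  - exact: proj_dmorphism S1_sub cT1 pr_spec.
  - move=> s Ss; rewrite pr_id; first exact: add_span_sub.
    exact: sat_span_sub.
  - by move=> z z_gens; apply: gens_e; apply: map_f.
exists (add_span T1 e); split.
- exact: add_span_submod.
- move=> t St [p T1t].
  have t_pe : t = pa p e.
    apply/eqP; rewrite -subr_eq0; apply/eqP; apply: S1T1 T1t.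
    apply: (submodB S1_sub); first exact: sat_span_sub.
    exact: (submod_pact S1_sub).
  by rewrite t_pe; apply: e_free; rewrite -t_pe.
- move=> n; have [S1n T1n] := pr_spec n; have [p Spr] := S1_e _ S1n.
  exists (pr n - pa p e) => //; exists p.
  by rewrite opprB addrA addrAC addrK.
Qed.

Lemma complement_exists (gens : seq V) S : submod S -> tf_quot G S ->
  spans S gens -> exists T, complement S T.
Proof.
elim: gens S => [|g gs IH] S S_sub S_tf span.
  exists (fun t => t = 0); split => //.
  - split => // [x y -> ->|c x ->|x ->];
      by rewrite ?addr0 ?scaler0 ?(clinear0 (dd_lin G)).
  - move=> n; exists n; last by rewrite subrr.
    by have [cs [s [Ss ->]]] := span n; rewrite big_ord0 add0r.
have [T1 cT1] := IH _ (sat_span_submod g S_sub) (@sat_span_tf S g)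
  (spans_sat_span S_sub span).
exact: complement_sat_span span cT1.
Qed.

End Submodules.

Lemma retraction_exists (M N : lmodType CC) (GM : gdmod M) (GN : gdmod N)
    (d : M -> N) :
  injective d -> dmorphism GM GN d -> fg_tf_quot GN (img d) ->
  exists2 r, dmorphism GN GM r & forall m, r (d m) = m.
Proof.
move=> d_inj [d_lin d_dd] [[gens span] S_tf].
have S_sub : submod GN (img d).
  split.
  - by exists 0; rewrite (clinear0 d_lin).
  - by move=> _ _ [m ->] [m' ->]; exists (m + m'); rewrite (clinearD d_lin).
  - by move=> c _ [m ->]; exists (c *: m); rewrite (clinearZ d_lin).
  - by move=> _ [m ->]; exists (dd GM m); rewrite d_dd.
have [T cT] := complement_exists S_sub S_tf span.
have [pr pr_spec] := complement_proj cT.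
have [pr_lin pr_dd] := proj_dmorphism S_sub cT pr_spec.
have [r dr] := choice (fun n m => pr n = d m) (fun n => (pr_spec n).1).
exists r; last first.
  by move=> m; apply: d_inj; rewrite -dr (proj_id S_sub cT pr_spec) //; exists m.
split => [a u w | n]; apply: d_inj.
- by rewrite -dr pr_lin d_lin -!dr.
- by rewrite -dr d_dd -dr pr_dd.
Qed.

Lemma cdual_dualmap (M N : lmodType CC) (GM : gdmod M) (GN : gdmod N)
    (T : M -> N) (f : N -> {poly CC}) :
  dmorphism GM GN T -> cdual GN f -> cdual GM (dualmap T f).
Proof.
move=> [T_lin T_dd] [f_lin f_dd]; split => [a u v | m]; rewrite /dualmap.
- by rewrite T_lin f_lin opprD scalerN.
- by rewrite T_dd f_dd mulrN.
Qed.

Lemma cdual_factor (N P : lmodType CC) (GN : gdmod N) (GP : gdmod P)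
    (T : N -> P) (g : N -> {poly CC}) :
  dmorphism GN GP T -> (forall p, exists n, p = T n) -> cdual GN g ->
  (forall n, T n = 0 -> g n = 0) ->
  exists2 f, cdual GP f & forall n, g n = dualmap T f n.
Proof.
move=> [T_lin T_dd] T_onto [g_lin g_dd] g_ker.
have [s sK] := choice (fun p n => p = T n) T_onto.
have g_fibre n n' : T n = T n' -> g n = g n'.
  move=> eqT; apply/eqP; rewrite -subr_eq0 -(clinearB g_lin); apply/eqP.
  by apply: g_ker; rewrite (clinearB T_lin) eqT subrr.
exists (fun p => - g (s p)); last first.
  by move=> n; rewrite /dualmap opprK; apply: g_fibre; apply: sK.
split => [a p p' | p].
- rewrite (g_fibre _ (a *: s p + s p')); first by rewrite g_lin opprD scalerN.
  by rewrite -sK T_lin -!sK.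
- rewrite (g_fibre _ (dd GN (s p))); first by rewrite g_dd mulrN.
  by rewrite -sK T_dd -sK.
Qed.

Theorem proposition2p19 (R : lmodType CC) (A : confsuperalg R)
    (M N P : lmodType CC)
    (SM : cmodule A M) (SN : cmodule A N) (SP : cmodule A P)
    (d1 : M -> N) (d2 : N -> P) :
  cmorphism SM SN d1 -> cmorphism SN SP d2 ->
  short_exact d1 d2 ->
  (* 0 -> M :  M / 0 *)
  fg_tf_quot (mgr SM) (fun m => m = 0) ->
  (* M -> N :  N / d1(M) *)
  fg_tf_quot (mgr SN) (img d1) ->
  (* N -> P :  P / d2(N) *)
  fg_tf_quot (mgr SP) (img d2) ->
  dual_short_exact (mgr SM) (mgr SN) (mgr SP) d1 d2.
Proof.
move=> [d1_lin d1_dd _] [d2_lin d2_dd _] [d1_inj ker_d2 d2_onto] _ quot1 _.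
have d1_morph : dmorphism (mgr SM) (mgr SN) d1 by [].
have d2_morph : dmorphism (mgr SN) (mgr SP) d2 by [].
split.
- move=> f _ f_d2 p; have [n ->] := d2_onto p.
  by apply: oppr_inj; rewrite oppr0; apply: f_d2.
- move=> g g_dual; split.
  + move=> g_d1; apply: cdual_factor d2_morph d2_onto g_dual _ => n.
    by move/ker_d2 => [m ->]; apply: oppr_inj; rewrite oppr0; apply: g_d1.
  + move=> [f [f_lin _] g_f] m; rewrite /dualmap g_f /dualmap.
    by rewrite (proj2 (ker_d2 _)) ?(clinear0 f_lin) ?oppr0 //; exists m.
- move=> h h_dual; have [r r_morph rK] := retraction_exists d1_inj d1_morph quot1.
  exists (dualmap r h); first exact: cdual_dualmap r_morph h_dual.
  by move=> m; rewrite /dualmap rK opprK.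
Qed.
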